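(* The map $\langle\cdot,\cdot\rangle\mapsto(\langle e_p,e_p\rangle)_{p\in\mathbb{Z}}$ defines a bijection of cones from $\mathcal{C}$ to $\mathcal{T}$, carrying $\mathcal{C}^+$ onto $\mathcal{T}^+$.
   Context: $\mathcal{S}$ is the space of rapidly decreasing complex sequences indexed by $\mathbb{Z}$, and $\mathcal{S}^*$ its dual (sequences of polynomial growth, paired by $\sum b^pc_p$); $e_p\in\mathcal{S}^*$ is the sequence with $1$ in place $p$ and $0$ elsewhere. Via the Fourier isomorphism $\mathcal{S}\cong L\mathbb{C}=C^\infty(S^1,\mathbb{C})$, rotation of the circle by $\lambda\in S^1$ and reversal of loops give operators on $\mathcal{S}^*$ with $R_\lambda e_p=\lambda^{-p}e_p$ and $\iota e_p=e_{-p}$. $\mathcal{C}$ is the cone of continuous positive semi-definite sesquilinear forms on $\mathcal{S}^*$ invariant under all $R_\lambda$ and under $\iota$; $\mathcal{C}^+\subseteq\mathcal{C}$ is the sub-cone of positive definite forms. $\mathcal{T}$ is the cone of non-negative rapidly decreasing sequences $(a_p)_{p\in\mathbb{Z}}$ with $a_p=a_{-p}$ for all $p$, and $\mathcal{T}^+$ the sub-cone of strictly positive such sequences. *)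

From Stdlib Require Import Reals ZArith.
From Coquelicot Require Import Coquelicot.
Open Scope R_scope.

Definition seqZ := Z -> C.

Definition wt (p : Z) : R := 1 + IZR (Z.abs p).

Definition rapid (c : seqZ) : Prop :=
  forall k : nat, exists M : R, forall p : Z, wt p ^ k * Cmod (c p) <= M.

(* S^* : sequences of polynomial growth *)
Definition polygrowth (b : seqZ) : Prop :=
  exists (N : nat) (M : R), forall p : Z, Cmod (b p) <= M * wt p ^ N.

Definition S_bounded (B : seqZ -> Prop) : Prop :=
  forall k : nat, exists M : R, forall c, B c ->
    forall p : Z, wt p ^ k * Cmod (c p) <= M.

(* sum over Z of a complex sequence (used only for absolutely summable ones) *)
Definition zsum (f : seqZ) : C :=
  (Series (fun n => Re (f (Z.of_nat n))) + Series (fun n => Re (f (- Z.of_nat n - 1)%Z)),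
   Series (fun n => Im (f (Z.of_nat n))) + Series (fun n => Im (f (- Z.of_nat n - 1)%Z))).

Definition dpair (b c : seqZ) : C := zsum (fun p => Cmult (b p) (c p)).

Definition e (p : Z) : seqZ := fun q => if Z.eqb q p then RtoC 1 else RtoC 0.

Definition Cpowz (l : C) (z : Z) : C :=
  if (0 <=? z)%Z then Cpow l (Z.to_nat z) else Cpow (Cinv l) (Z.to_nat (- z)).

Definition rot (l : C) (b : seqZ) : seqZ := fun p => Cmult (Cpowz l (- p)) (b p).
Definition rev (b : seqZ) : seqZ := fun p => b (- p)%Z.

Definition form := seqZ -> seqZ -> C.

Definition sesquilinear (beta : form) : Prop :=
  (forall b b' c, polygrowth b -> polygrowth b' -> polygrowth c ->
     beta (fun p => Cplus (b p) (b' p)) c = Cplus (beta b c) (beta b' c) /\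
     beta c (fun p => Cplus (b p) (b' p)) = Cplus (beta c b) (beta c b')) /\
  (forall (a : C) b c, polygrowth b -> polygrowth c ->
     beta (fun p => Cmult a (b p)) c = Cmult (Cconj a) (beta b c) /\
     beta c (fun p => Cmult a (b p)) = Cmult a (beta c b)).

(* continuity for the strong dual topology on S^*, whose 0-neighbourhoods
   are generated by the (directed family of) seminorms
   q_B(b) = sup_{c in B} |<b,c>|, B bounded in S: a sesquilinear form is
   (jointly) continuous iff |beta(b,b')| <= C q_B(b) q_B(b') for some B, C. *)
Definition strong_continuous (beta : form) : Prop :=
  exists (B : seqZ -> Prop) (K : R),
    S_bounded B /\ 0 <= K /\
    forall b b' (r r' : R), polygrowth b -> polygrowth b' ->
      (forall c, B c -> Cmod (dpair b c) <= r) ->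
      (forall c, B c -> Cmod (dpair b' c) <= r') ->
      Cmod (beta b b') <= K * r * r'.

Definition psd (beta : form) : Prop :=
  forall b, polygrowth b -> Im (beta b b) = 0 /\ 0 <= Re (beta b b).

Definition pd (beta : form) : Prop :=
  psd beta /\ forall b, polygrowth b -> beta b b = RtoC 0 -> forall p, b p = RtoC 0.

Definition invariant (beta : form) : Prop :=
  (forall l : C, Cmod l = 1 -> forall b c, polygrowth b -> polygrowth c ->
     beta (rot l b) (rot l c) = beta b c) /\
  (forall b c, polygrowth b -> polygrowth c -> beta (rev b) (rev c) = beta b c).

Definition coneC (beta : form) : Prop :=
  sesquilinear beta /\ strong_continuous beta /\ psd beta /\ invariant beta.
Definition coneCplus (beta : form) : Prop := coneC beta /\ pd beta.

Definition rapidR (a : Z -> R) : Prop :=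
  forall k : nat, exists M : R, forall p : Z, wt p ^ k * Rabs (a p) <= M.
Definition coneT (a : Z -> R) : Prop :=
  rapidR a /\ (forall p, 0 <= a p) /\ (forall p, a p = a (- p)%Z).
Definition coneTplus (a : Z -> R) : Prop := coneT a /\ forall p, 0 < a p.

(* the map <.,.> |-> (<e_p,e_p>)_p ; on C these values are real (psd),
   so taking the real part loses nothing *)
Definition diagmap (beta : form) : Z -> R := fun p => Re (beta (e p) (e p)).

Definition form_add (b1 b2 : form) : form := fun x y => Cplus (b1 x y) (b2 x y).
Definition form_scal (t : R) (b : form) : form := fun x y => Cmult (RtoC t) (b x y).

From Stdlib Require Import Bool Reals ZArith Lia Lra FunctionalExtensionality.
From Coquelicot Require Import Coquelicot.
Open Scope R_scope.

(* Rotation invariance forces beta (e p) (e q) = 0 for p <> q: rotating by an angle t with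
   (p - q) t = pi multiplies it by -1.  By sesquilinearity, beta evaluated on the truncations
   of x and y to the window -N <= p < N is then the partial sum of
   sum_p conj (x p) (y p) a_p, where a_p = beta (e p) (e p); continuity against a bounded
   subset of S makes the truncation error O(1/N), so every beta in C is the diagonal form
   with weights a, whence injectivity.  Continuity at e_p makes a rapidly decreasing,
   positivity makes it non-negative and reversal invariance makes it even.  Conversely,
   every a in T defines a diagonal form in C, which is positive definite exactly when a > 0. *)

Lemma wt_ge1 (p : Z) : 1 <= wt p.
Proof. unfold wt. assert (0 <= IZR (Z.abs p)) by (apply IZR_le; lia). lra. Qed.

Lemma wt_gt0 (p : Z) : 0 < wt p.
Proof. pose proof (wt_ge1 p). lra. Qed.

Lemma wt_pow_gt0 (p : Z) (k : nat) : 0 < wt p ^ k.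
Proof. apply pow_lt, wt_gt0. Qed.

Lemma wt_opp (p : Z) : wt (- p) = wt p.
Proof. unfold wt. now rewrite Z.abs_opp. Qed.

Lemma wt_of_nat (n : nat) : wt (Z.of_nat n) = INR n + 1.
Proof. unfold wt. rewrite Z.abs_eq, INR_IZR_INZ by lia. ring. Qed.

Lemma wt_neg_of_nat (n : nat) : wt (- Z.of_nat n - 1) = INR n + 2.
Proof.
  unfold wt. rewrite Z.abs_neq by lia.
  replace (- (- Z.of_nat n - 1))%Z with (Z.of_nat n + 1)%Z by lia.
  rewrite plus_IZR, <- INR_IZR_INZ. ring.
Qed.

Lemma Z_nat_cases (p : Z) :
  (exists n, p = Z.of_nat n) \/ (exists n, p = (- Z.of_nat n - 1)%Z).
Proof.
  destruct (Z_le_gt_dec 0 p).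
  - left. exists (Z.to_nat p). lia.
  - right. exists (Z.to_nat (- p - 1)). lia.
Qed.

Lemma le_div_wt_pow (p : Z) (k : nat) (t M : R) : wt p ^ k * t <= M -> t <= M / wt p ^ k.
Proof. intros H. apply Rle_div_r; [apply wt_pow_gt0|]. now rewrite Rmult_comm. Qed.

Lemma pow_mul_inv_pow_add (w : R) (a b : nat) : 0 < w -> w ^ a * / w ^ (a + b) = / w ^ b.
Proof.
  intros Hw. rewrite pow_add. pose proof (pow_lt w a Hw). pose proof (pow_lt w b Hw).
  field. lra.
Qed.

Lemma is_lim_seq_inv_INR_add (c : R) : 0 < c -> is_lim_seq (fun n => / (INR n + c)) 0.
Proof.
  intros Hc. replace (Finite 0) with (Rbar_inv p_infty) by reflexivity.
  apply is_lim_seq_inv; [|discriminate].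
  apply (is_lim_seq_plus _ _ p_infty c p_infty);
    [apply is_lim_seq_INR | apply is_lim_seq_const | reflexivity].
Qed.

Lemma is_series_telescope_inv : is_series (fun n => / (INR n + 1) - / (INR n + 2)) 1.
Proof.
  assert (Hsum : forall N, sum_f_R0 (fun n => / (INR n + 1) - / (INR n + 2)) N = 1 - / (INR N + 2)).
  { induction N.
    - simpl. field.
    - rewrite tech5, IHN, S_INR. pose proof (pos_INR N). field. split; lra. }
  assert (Hlim : is_lim_seq (sum_n (fun n => / (INR n + 1) - / (INR n + 2))) 1).
  { apply (is_lim_seq_ext (fun N => 1 - / (INR N + 2))); [intros N; now rewrite sum_n_Reals, Hsum|].
    replace (Finite 1) with (Finite (1 - 0)) by (f_equal; ring).
    apply is_lim_seq_minus'; [apply is_lim_seq_const | apply is_lim_seq_inv_INR_add; lra]. }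
  exact Hlim.
Qed.

Definition inv_sq (n : nat) : R := / (INR n + 1) ^ 2.

Lemma inv_sq_gt0 (n : nat) : 0 < inv_sq n.
Proof. unfold inv_sq. apply Rinv_0_lt_compat. pose proof (pos_INR n). nra. Qed.

Lemma ex_series_inv_sq : ex_series inv_sq.
Proof.
  apply (ex_series_le (K := R_AbsRing) (V := R_CompleteNormedModule) _
           (fun n => 2 * (/ (INR n + 1) - / (INR n + 2)))).
  - intros n. change (Rabs (inv_sq n) <= 2 * (/ (INR n + 1) - / (INR n + 2))).
    rewrite Rabs_pos_eq by (apply Rlt_le, inv_sq_gt0). unfold inv_sq.
    pose proof (pos_INR n).
    replace (2 * (/ (INR n + 1) - / (INR n + 2))) with (/ ((INR n + 1) * (INR n + 2) / 2))
      by (field; lra).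
    apply Rinv_le_contravar; nra.
  - apply (ex_series_scal (K := R_AbsRing) (V := R_NormedModule) 2).
    exists 1. apply is_series_telescope_inv.
Qed.

Definition inv_sq_sum : R := Series inv_sq.

Lemma Series_const0 : Series (fun _ => 0) = 0.
Proof.
  rewrite (Series_ext _ (fun _ => 0 * 0)) by (intros; ring).
  rewrite Series_scal_l. ring.
Qed.

Lemma Series_ge0 (v : nat -> R) : ex_series v -> (forall n, 0 <= v n) -> 0 <= Series v.
Proof.
  intros Hv H. rewrite <- Series_const0. apply Series_le; auto. intros n. split; [lra | auto].
Qed.

Lemma inv_sq_sum_ge0 : 0 <= inv_sq_sum.
Proof. apply Series_ge0; [apply ex_series_inv_sq | intros n; apply Rlt_le, inv_sq_gt0]. Qed.

Lemma Series_ge_term (v : nat -> R) (m : nat) :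
  ex_series v -> (forall n, 0 <= v n) -> v m <= Series v.
Proof.
  intros Hv H. rewrite (Series_incr_n v (S m)) by (auto; lia). simpl pred.
  assert (v m <= sum_f_R0 v m).
  { destruct m; simpl; [lra|]. pose proof (cond_pos_sum v m H). lra. }
  assert (0 <= Series (fun k => v (S m + k)%nat)).
  { apply Series_ge0; auto.
    now apply (ex_series_incr_n (K := R_AbsRing) (V := R_NormedModule) v (S m)). }
  lra.
Qed.

Lemma Series_single (v : nat -> R) (m : nat) : (forall n, n <> m -> v n = 0) -> Series v = v m.
Proof.
  intros H. apply is_series_unique.
  assert (Hpart : forall N, (m <= N)%nat -> sum_f_R0 v N = v m).
  { induction N; intros HN.
    - destruct m; [reflexivity | lia].
    - destruct (Nat.eq_dec m (S N)) as [->|Hm].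
      + rewrite tech5, (sum_eq_R0 v N); [ring|]. intros n Hn. apply H. lia.
      + rewrite tech5, IHN by lia. rewrite (H (S N)) by auto. ring. }
  assert (Hlim : is_lim_seq (sum_n v) (v m)).
  { apply (is_lim_seq_ext_loc (fun _ => v m)); [|apply is_lim_seq_const].
    exists m. intros N HN. now rewrite sum_n_Reals, Hpart. }
  exact Hlim.
Qed.

Lemma lim_eq_of_approx (x y : R) (v : nat -> R) (K : R) :
  is_lim_seq v y -> (forall N, Rabs (x - v N) <= K * / (INR N + 1)) -> x = y.
Proof.
  intros Hv HK.
  assert (Hx : is_lim_seq v x).
  { assert (H0 : is_lim_seq (fun N => K * / (INR N + 1)) 0).
    { replace (Finite 0) with (Rbar_mult K 0) by (simpl; f_equal; ring).
      apply is_lim_seq_scal_l, is_lim_seq_inv_INR_add. lra. }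
    apply (is_lim_seq_le_le (fun N => x - K * / (INR N + 1)) _ (fun N => x + K * / (INR N + 1))).
    - intros N. specialize (HK N). apply Rabs_le_between in HK. lra.
    - replace (Finite x) with (Finite (x - 0)) by (f_equal; ring).
      apply is_lim_seq_minus'; [apply is_lim_seq_const | exact H0].
    - replace (Finite x) with (Finite (x + 0)) by (f_equal; ring).
      apply is_lim_seq_plus'; [apply is_lim_seq_const | exact H0]. }
  apply is_lim_seq_unique in Hx, Hv. rewrite Hv in Hx. now injection Hx.
Qed.

(** * Absolutely convergent sums over Z *)

Definition zsumR (u : Z -> R) : R :=
  Series (fun n => u (Z.of_nat n)) + Series (fun n => u (- Z.of_nat n - 1)%Z).

Definition dominated (u : Z -> R) (A : R) : Prop := forall p, Rabs (u p) <= A / wt p ^ 2.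

Lemma dominated_ge0 (u : Z -> R) (A : R) : dominated u A -> 0 <= A.
Proof.
  intros H. specialize (H 0%Z). apply Rle_div_r in H; [|apply wt_pow_gt0].
  pose proof (Rabs_pos (u 0%Z)). pose proof (wt_pow_gt0 0 2). nra.
Qed.

Lemma dominated_scal (c : R) (u : Z -> R) (A : R) :
  dominated u A -> dominated (fun p => c * u p) (Rabs c * A).
Proof.
  intros H p. rewrite Rabs_mult. unfold Rdiv. rewrite Rmult_assoc.
  apply Rmult_le_compat_l; [apply Rabs_pos | apply H].
Qed.

Lemma dominated_nat (u : Z -> R) (A : R) (n : nat) :
  dominated u A -> Rabs (u (Z.of_nat n)) <= A * inv_sq n.
Proof. intros H. specialize (H (Z.of_nat n)). now rewrite wt_of_nat in H. Qed.

Lemma dominated_neg (u : Z -> R) (A : R) (n : nat) :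
  dominated u A -> Rabs (u (- Z.of_nat n - 1)%Z) <= A * inv_sq n.
Proof.
  intros H. pose proof (dominated_ge0 _ _ H) as HA. specialize (H (- Z.of_nat n - 1)%Z).
  rewrite wt_neg_of_nat in H. eapply Rle_trans; [exact H|].
  unfold inv_sq, Rdiv. apply Rmult_le_compat_l; auto.
  pose proof (pos_INR n). apply Rinv_le_contravar; nra.
Qed.

Lemma inv_sq_comparison (v : nat -> R) (A : R) :
  (forall n, Rabs (v n) <= A * inv_sq n) -> ex_series v /\ Rabs (Series v) <= A * inv_sq_sum.
Proof.
  intros H.
  assert (Habs : ex_series (fun n => Rabs (v n))).
  { apply (ex_series_le (K := R_AbsRing) (V := R_CompleteNormedModule) _ (fun n => A * inv_sq n)).
    - intros n. change (Rabs (Rabs (v n)) <= A * inv_sq n). now rewrite Rabs_Rabsolu.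
    - apply (ex_series_scal (K := R_AbsRing) (V := R_NormedModule)), ex_series_inv_sq. }
  split; [now apply ex_series_Rabs|].
  eapply Rle_trans; [now apply Series_Rabs|]. unfold inv_sq_sum. rewrite <- Series_scal_l.
  apply Series_le; [|apply (ex_series_scal (K := R_AbsRing) (V := R_NormedModule)), ex_series_inv_sq].
  intros n. split; [apply Rabs_pos | auto].
Qed.

Lemma ex_series_dominated (u : Z -> R) (A : R) : dominated u A ->
  ex_series (fun n => u (Z.of_nat n)) /\ ex_series (fun n => u (- Z.of_nat n - 1)%Z).
Proof.
  intros H. split; apply (inv_sq_comparison _ A); intros n.
  - now apply dominated_nat.
  - now apply dominated_neg.
Qed.

Lemma zsumR_bound (u : Z -> R) (A : R) : dominated u A -> Rabs (zsumR u) <= 2 * A * inv_sq_sum.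
Proof.
  intros H. unfold zsumR.
  destruct (inv_sq_comparison (fun n => u (Z.of_nat n)) A) as [_ H1];
    [intros; now apply dominated_nat|].
  destruct (inv_sq_comparison (fun n => u (- Z.of_nat n - 1)%Z) A) as [_ H2];
    [intros; now apply dominated_neg|].
  eapply Rle_trans; [apply Rabs_triang | lra].
Qed.

Lemma zsumR_ext (u v : Z -> R) : (forall p, u p = v p) -> zsumR u = zsumR v.
Proof. intros H. unfold zsumR. f_equal; apply Series_ext; intros; apply H. Qed.

Lemma zsumR_plus (u v : Z -> R) (A B : R) : dominated u A -> dominated v B ->
  zsumR (fun p => u p + v p) = zsumR u + zsumR v.
Proof.
  intros Hu Hv. destruct (ex_series_dominated _ _ Hu), (ex_series_dominated _ _ Hv).
  unfold zsumR. rewrite !Series_plus by auto. ring.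
Qed.

Lemma zsumR_minus (u v : Z -> R) (A B : R) : dominated u A -> dominated v B ->
  zsumR (fun p => u p - v p) = zsumR u - zsumR v.
Proof.
  intros Hu Hv. destruct (ex_series_dominated _ _ Hu), (ex_series_dominated _ _ Hv).
  unfold zsumR. rewrite !Series_minus by auto. ring.
Qed.

Lemma zsumR_scal (c : R) (u : Z -> R) : zsumR (fun p => c * u p) = c * zsumR u.
Proof. unfold zsumR. rewrite !Series_scal_l. ring. Qed.

Lemma zsumR_ge0 (u : Z -> R) (A : R) : dominated u A -> (forall p, 0 <= u p) -> 0 <= zsumR u.
Proof.
  intros Hd H. destruct (ex_series_dominated _ _ Hd) as [E1 E2]. unfold zsumR.
  pose proof (Series_ge0 _ E1 (fun n => H _)). pose proof (Series_ge0 _ E2 (fun n => H _)). lra.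
Qed.

Lemma zsumR_eq0_ge0 (u : Z -> R) (A : R) : dominated u A -> (forall p, 0 <= u p) ->
  zsumR u = 0 -> forall p, u p = 0.
Proof.
  intros Hd H Hz p. destruct (ex_series_dominated _ _ Hd) as [E1 E2]. unfold zsumR in Hz.
  pose proof (Series_ge0 _ E1 (fun n => H _)). pose proof (Series_ge0 _ E2 (fun n => H _)).
  pose proof (H p).
  destruct (Z_nat_cases p) as [[n ->]|[n ->]].
  - pose proof (Series_ge_term _ n E1 (fun n => H _)). simpl in *. lra.
  - pose proof (Series_ge_term _ n E2 (fun n => H _)). simpl in *. lra.
Qed.

Lemma zsumR_single (u : Z -> R) (p : Z) : (forall q, q <> p -> u q = 0) -> zsumR u = u p.
Proof.
  intros H. unfold zsumR. destruct (Z_nat_cases p) as [[m ->]|[m ->]].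
  - rewrite (Series_single _ m), (Series_single _ 0).
    + rewrite (H (- Z.of_nat 0 - 1)%Z) by lia. ring.
    + intros n _. apply H. lia.
    + intros n Hn. apply H. lia.
  - rewrite (Series_single (fun n => u (Z.of_nat n)) 0), (Series_single _ m).
    + rewrite (H (Z.of_nat 0)) by lia. ring.
    + intros n Hn. apply H. lia.
    + intros n _. apply H. lia.
Qed.

Lemma zsumR_opp (u : Z -> R) (A : R) : dominated u A -> zsumR (fun p => u (- p)%Z) = zsumR u.
Proof.
  intros Hd.
  assert (Hd' : dominated (fun p => u (- p)%Z) A) by (intros p; rewrite <- wt_opp; apply Hd).
  destruct (ex_series_dominated _ _ Hd) as [E1 _]. destruct (ex_series_dominated _ _ Hd') as [E2 _].
  unfold zsumR. rewrite (Series_incr_1 _ E1), (Series_incr_1 _ E2).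
  rewrite (Series_ext (fun n => u (- Z.of_nat (S n))%Z) (fun n => u (- Z.of_nat n - 1)%Z))
    by (intros; f_equal; lia).
  rewrite (Series_ext (fun n => u (- (- Z.of_nat n - 1))%Z) (fun n => u (Z.of_nat (S n))))
    by (intros; f_equal; lia).
  simpl. ring.
Qed.

Lemma is_lim_seq_zsumR (u : Z -> R) (A : R) : dominated u A ->
  is_lim_seq (fun N => sum_f_R0 (fun n => u (Z.of_nat n) + u (- Z.of_nat n - 1)%Z) N) (zsumR u).
Proof.
  intros Hd. destruct (ex_series_dominated _ _ Hd) as [E1 E2].
  apply (is_lim_seq_ext (fun N => sum_n (fun n => u (Z.of_nat n)) N
                                + sum_n (fun n => u (- Z.of_nat n - 1)%Z) N)).
  - intros N. rewrite !sum_n_Reals. induction N; [reflexivity|]. rewrite !tech5, <- IHN. ring.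
  - apply is_lim_seq_plus'; apply Series_correct; assumption.
Qed.

Definition Cdominated (f : seqZ) (A : R) : Prop := forall p, Cmod (f p) <= A / wt p ^ 2.

Lemma zsum_re_im (f : seqZ) :
  zsum f = (zsumR (fun p => Re (f p)), zsumR (fun p => Im (f p))).
Proof. reflexivity. Qed.

Lemma Im_le_Cmod (c : C) : Rabs (Im c) <= Cmod c.
Proof. eapply Rle_trans; [apply Rmax_r | apply Rmax_Cmod]. Qed.

Lemma Re_sub_le_Cmod (a b : C) : Rabs (Re a - Re b) <= Cmod (a - b).
Proof.
  replace (Re a - Re b) with (Re (a - b)%C) by (unfold Re; simpl; ring). apply re_le_Cmod.
Qed.

Lemma Im_sub_le_Cmod (a b : C) : Rabs (Im a - Im b) <= Cmod (a - b).
Proof.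
  replace (Im a - Im b) with (Im (a - b)%C) by (unfold Im; simpl; ring). apply Im_le_Cmod.
Qed.

Lemma Cmod_le_Re_Im (c : C) : Cmod c <= Rabs (Re c) + Rabs (Im c).
Proof.
  pose proof (Rabs_pos (Re c)). pose proof (Rabs_pos (Im c)).
  apply Rsqr_incr_0_var; [|lra]. rewrite !Rsqr_pow2, Cmod2_alt.
  rewrite <- (pow2_abs (Re c)), <- (pow2_abs (Im c)). nra.
Qed.

Lemma Cdominated_re (f : seqZ) (A : R) : Cdominated f A -> dominated (fun p => Re (f p)) A.
Proof. intros H p. eapply Rle_trans; [apply re_le_Cmod | apply H]. Qed.

Lemma Cdominated_im (f : seqZ) (A : R) : Cdominated f A -> dominated (fun p => Im (f p)) A.
Proof. intros H p. eapply Rle_trans; [apply Im_le_Cmod | apply H]. Qed.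

Lemma zsum_bound (f : seqZ) (A : R) : Cdominated f A -> Cmod (zsum f) <= 4 * A * inv_sq_sum.
Proof.
  intros H. eapply Rle_trans; [apply Cmod_le_Re_Im|].
  pose proof (zsumR_bound _ _ (Cdominated_re _ _ H)).
  pose proof (zsumR_bound _ _ (Cdominated_im _ _ H)).
  rewrite zsum_re_im. simpl. lra.
Qed.

Lemma zsum_ext (f g : seqZ) : (forall p, f p = g p) -> zsum f = zsum g.
Proof. intros H. unfold zsum. now rewrite (functional_extensionality f g H). Qed.

Lemma zsum_plus (f g : seqZ) (A B : R) : Cdominated f A -> Cdominated g B ->
  zsum (fun p => f p + g p)%C = (zsum f + zsum g)%C.
Proof.
  intros Hf Hg. rewrite !zsum_re_im. apply injective_projections; cbn -[zsumR].
  - apply (zsumR_plus _ _ _ _ (Cdominated_re _ _ Hf) (Cdominated_re _ _ Hg)).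
  - apply (zsumR_plus _ _ _ _ (Cdominated_im _ _ Hf) (Cdominated_im _ _ Hg)).
Qed.

Lemma zsum_scal (c : C) (f : seqZ) (A : R) : Cdominated f A ->
  zsum (fun p => c * f p)%C = (c * zsum f)%C.
Proof.
  intros Hf. pose proof (Cdominated_re _ _ Hf) as Hre. pose proof (Cdominated_im _ _ Hf) as Him.
  rewrite !zsum_re_im. apply injective_projections; cbn -[zsumR].
  - rewrite <- !zsumR_scal.
    apply (zsumR_minus _ _ _ _ (dominated_scal (fst c) _ _ Hre) (dominated_scal (snd c) _ _ Him)).
  - rewrite <- !zsumR_scal.
    apply (zsumR_plus _ _ _ _ (dominated_scal (fst c) _ _ Him) (dominated_scal (snd c) _ _ Hre)).
Qed.

Lemma zsum_single (f : seqZ) (p : Z) : (forall q, q <> p -> f q = 0%C) -> zsum f = f p.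
Proof.
  intros H. rewrite zsum_re_im. apply injective_projections; cbn -[zsumR].
  - apply (zsumR_single (fun q => Re (f q))). intros q Hq. now rewrite H.
  - apply (zsumR_single (fun q => Im (f q))). intros q Hq. now rewrite H.
Qed.

Lemma zsum_opp (f : seqZ) (A : R) : Cdominated f A -> zsum (fun p => f (- p)%Z) = zsum f.
Proof.
  intros H. rewrite !zsum_re_im. apply injective_projections; cbn -[zsumR].
  - apply (zsumR_opp (fun p => Re (f p)) A (Cdominated_re _ _ H)).
  - apply (zsumR_opp (fun p => Im (f p)) A (Cdominated_im _ _ H)).
Qed.

Fixpoint zpartial (f : seqZ) (N : nat) : C :=
  match N with
  | O => 0%C
  | S n => (zpartial f n + (f (Z.of_nat n) + f (- Z.of_nat n - 1)%Z))%C
  end.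

Lemma zsum_eq_of_approx (z : C) (f : seqZ) (A K : R) : Cdominated f A ->
  (forall N, Cmod (z - zpartial f N) <= K * / (INR N + 1)) -> z = zsum f.
Proof.
  intros Hf HK.
  assert (Hpart : forall (proj : C -> R), (forall a b, proj (a + b)%C = proj a + proj b) ->
            forall N, proj (zpartial f (S N))
                      = sum_f_R0 (fun n => proj (f (Z.of_nat n)) + proj (f (- Z.of_nat n - 1)%Z)) N).
  { intros proj Hproj N. induction N.
    - cbn [zpartial]. rewrite !Hproj. replace (proj 0%C) with 0; [simpl; ring|].
      specialize (Hproj 0%C 0%C). rewrite Cplus_0_l in Hproj. lra.
    - change (zpartial f (S (S N)))
        with (zpartial f (S N) + (f (Z.of_nat (S N)) + f (- Z.of_nat (S N) - 1)%Z))%C.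
      rewrite Hproj, IHN, tech5, Hproj. reflexivity. }
  apply injective_projections.
  - apply (lim_eq_of_approx _ _ (fun N => Re (zpartial f N)) K).
    + apply is_lim_seq_incr_1.
      apply (is_lim_seq_ext _ _ _ (fun N => eq_sym (Hpart Re (fun a b => eq_refl) N))).
      apply (is_lim_seq_zsumR _ _ (Cdominated_re _ _ Hf)).
    + intros N. eapply Rle_trans; [apply Re_sub_le_Cmod | apply HK].
  - apply (lim_eq_of_approx _ _ (fun N => Im (zpartial f N)) K).
    + apply is_lim_seq_incr_1.
      apply (is_lim_seq_ext _ _ _ (fun N => eq_sym (Hpart Im (fun a b => eq_refl) N))).
      apply (is_lim_seq_zsumR _ _ (Cdominated_im _ _ Hf)).
    + intros N. eapply Rle_trans; [apply Im_sub_le_Cmod | apply HK].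
Qed.

(** * Sequences of polynomial growth and their truncations *)

Lemma e_same (p : Z) : e p p = 1%C.
Proof. unfold e. now rewrite Z.eqb_refl. Qed.

Lemma e_diff (p q : Z) : q <> p -> e p q = 0%C.
Proof. intros H. unfold e. apply Z.eqb_neq in H. now rewrite H. Qed.

Lemma Cmod_e_le1 (p q : Z) : Cmod (e p q) <= 1.
Proof. unfold e. destruct (q =? p)%Z; [rewrite Cmod_1 | rewrite Cmod_0]; lra. Qed.

Definition growth_bound (x : seqZ) (m : nat) (A : R) : Prop :=
  forall p, Cmod (x p) <= A * wt p ^ m.

Lemma growth_bound_ge0 (x : seqZ) (m : nat) (A : R) : growth_bound x m A -> 0 <= A.
Proof.
  intros H. specialize (H 0%Z). pose proof (Cmod_ge_0 (x 0%Z)). pose proof (wt_pow_gt0 0 m).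
  nra.
Qed.

Lemma polygrowth_bounded (z : seqZ) (M : R) : (forall p, Cmod (z p) <= M) -> polygrowth z.
Proof. intros H. exists 0%nat, M. intros p. simpl. now rewrite Rmult_1_r. Qed.

Lemma polygrowth_plus (x y : seqZ) :
  polygrowth x -> polygrowth y -> polygrowth (fun p => x p + y p)%C.
Proof.
  intros [m [A Hx]] [n [B Hy]]. exists (m + n)%nat, (A + B). intros p.
  pose proof (growth_bound_ge0 _ _ _ Hx). pose proof (growth_bound_ge0 _ _ _ Hy).
  pose proof (Rle_pow (wt p) m (m + n) (wt_ge1 p) ltac:(lia)).
  pose proof (Rle_pow (wt p) n (m + n) (wt_ge1 p) ltac:(lia)).
  eapply Rle_trans; [apply Cmod_triangle|]. specialize (Hx p). specialize (Hy p). nra.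
Qed.

Lemma polygrowth_e (p : Z) : polygrowth (e p).
Proof. apply (polygrowth_bounded _ 1), Cmod_e_le1. Qed.

Lemma polygrowth_scal_e (a : C) (p : Z) : polygrowth (fun q => a * e p q)%C.
Proof.
  apply (polygrowth_bounded _ (Cmod a)). intros q. rewrite Cmod_mult.
  pose proof (Cmod_e_le1 p q). pose proof (Cmod_ge_0 a). nra.
Qed.

Lemma dpair_scal_e (b : seqZ) (a : C) (p : Z) : dpair b (fun q => a * e p q)%C = (b p * a)%C.
Proof.
  unfold dpair. rewrite (zsum_single _ p).
  - rewrite e_same. ring.
  - intros q Hq. rewrite e_diff by auto. ring.
Qed.

Lemma dpair_e (p : Z) (c : seqZ) : dpair (e p) c = c p.
Proof.
  unfold dpair. rewrite (zsum_single _ p).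
  - rewrite e_same. ring.
  - intros q Hq. rewrite e_diff by auto. ring.
Qed.

Lemma dpair_bound (B : seqZ -> Prop) : S_bounded B -> forall m : nat, exists M : R,
  forall z A c, growth_bound z m A -> B c -> Cmod (dpair z c) <= A * M.
Proof.
  intros HB m. destruct (HB (m + 2)%nat) as [M HM]. exists (4 * M * inv_sq_sum).
  intros z A c Hz Hc. replace (A * (4 * M * inv_sq_sum)) with (4 * (A * M) * inv_sq_sum) by ring.
  apply zsum_bound. intros p. rewrite Cmod_mult.
  assert (Hc' : Cmod (c p) <= M / wt p ^ (m + 2)) by (apply le_div_wt_pow, HM, Hc).
  eapply Rle_trans.
  { apply Rmult_le_compat; [apply Cmod_ge_0 | apply Cmod_ge_0 | apply Hz | exact Hc']. }
  unfold Rdiv. rewrite <- (pow_mul_inv_pow_add (wt p) m 2) by apply wt_gt0. lra.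
Qed.

Definition in_window (N : nat) (p : Z) : bool := andb (- Z.of_nat N <=? p)%Z (p <? Z.of_nat N)%Z.

Lemma in_window_spec (N : nat) (p : Z) :
  in_window N p = true <-> (- Z.of_nat N <= p < Z.of_nat N)%Z.
Proof. unfold in_window. rewrite andb_true_iff, Z.leb_le, Z.ltb_lt. reflexivity. Qed.

Lemma in_window_S (N : nat) (p : Z) : in_window (S N) p
  = orb (orb (in_window N p) (p =? Z.of_nat N)%Z) (p =? - Z.of_nat N - 1)%Z.
Proof.
  unfold in_window. rewrite Nat2Z.inj_succ.
  destruct (Z.leb_spec (- Z.succ (Z.of_nat N)) p), (Z.ltb_spec p (Z.succ (Z.of_nat N))),
    (Z.leb_spec (- Z.of_nat N) p), (Z.ltb_spec p (Z.of_nat N)),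
    (Z.eqb_spec p (Z.of_nat N)), (Z.eqb_spec p (- Z.of_nat N - 1));
    simpl; reflexivity || lia.
Qed.

Definition trunc (x : seqZ) (N : nat) : seqZ := fun p => if in_window N p then x p else 0%C.
Definition tail (x : seqZ) (N : nat) : seqZ := fun p => if in_window N p then 0%C else x p.

Lemma trunc_add_tail (x : seqZ) (N : nat) : x = (fun p => trunc x N p + tail x N p)%C.
Proof.
  apply functional_extensionality. intros p. unfold trunc, tail.
  destruct (in_window N p); ring.
Qed.

Lemma trunc_0 (x : seqZ) : trunc x 0 = (fun _ => RtoC 0).
Proof.
  apply functional_extensionality. intros p. unfold trunc.
  destruct (in_window 0 p) eqn:Hw; [apply in_window_spec in Hw; simpl in Hw; lia | reflexivity].
Qed.

Lemma trunc_S (x : seqZ) (N : nat) : trunc x (S N) = (fun p => trunc x N p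
  + (x (Z.of_nat N) * e (Z.of_nat N) p + x (- Z.of_nat N - 1)%Z * e (- Z.of_nat N - 1)%Z p))%C.
Proof.
  apply functional_extensionality. intros p. unfold trunc. rewrite in_window_S.
  destruct (in_window N p) eqn:Hw; [apply in_window_spec in Hw|];
    destruct (Z.eqb_spec p (Z.of_nat N)) as [E1|H1];
    destruct (Z.eqb_spec p (- Z.of_nat N - 1)) as [E2|H2];
    try lia; subst; simpl; rewrite ?e_same; rewrite ?e_diff by lia; ring.
Qed.

Lemma zpartial_ext (f g : seqZ) (N : nat) :
  (forall p, in_window N p = true -> f p = g p) -> zpartial f N = zpartial g N.
Proof.
  induction N; intros H; cbn [zpartial]; [reflexivity|].
  assert (HN : forall p, in_window N p = true -> f p = g p).
  { intros p Hp. apply H. now rewrite in_window_S, Hp. }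
  rewrite (IHN HN), (H (Z.of_nat N)), (H (- Z.of_nat N - 1)%Z);
    [reflexivity | apply in_window_spec; lia ..].
Qed.

Lemma zpartial_single (f : seqZ) (p : Z) (N : nat) :
  (forall q, q <> p -> f q = 0%C) -> zpartial f N = trunc f N p.
Proof.
  intros H. induction N.
  - now rewrite trunc_0.
  - change (zpartial f (S N)) with (zpartial f N + (f (Z.of_nat N) + f (- Z.of_nat N - 1)%Z))%C.
    rewrite IHN, trunc_S.
    destruct (Z.eq_dec p (Z.of_nat N)) as [->|H1];
      [|destruct (Z.eq_dec p (- Z.of_nat N - 1)) as [->|H2]];
      rewrite ?e_same; rewrite ?e_diff by lia; rewrite ?(H (Z.of_nat N)), ?(H (- Z.of_nat N - 1)%Z) by lia;
      ring.
Qed.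

Lemma growth_bound_trunc (x : seqZ) (m : nat) (A : R) (N : nat) :
  growth_bound x m A -> growth_bound (trunc x N) m A.
Proof.
  intros H p. unfold trunc. destruct (in_window N p); [apply H|].
  rewrite Cmod_0. pose proof (growth_bound_ge0 _ _ _ H). pose proof (wt_pow_gt0 p m). nra.
Qed.

Lemma growth_bound_tail (x : seqZ) (m : nat) (A : R) (N : nat) :
  growth_bound x m A -> growth_bound (tail x N) (S m) (A / (INR N + 1)).
Proof.
  intros H p. pose proof (growth_bound_ge0 _ _ _ H). pose proof (pos_INR N).
  pose proof (wt_pow_gt0 p m). pose proof (wt_gt0 p).
  assert (0 <= A / (INR N + 1)) by (apply Rle_div_r; lra).
  unfold tail. destruct (in_window N p) eqn:Hw.
  { rewrite Cmod_0. simpl. apply Rmult_le_pos; [lra|]. nra. }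
  assert (Hwt : INR N + 1 <= wt p).
  { apply not_true_iff_false in Hw. rewrite in_window_spec in Hw.
    unfold wt. rewrite INR_IZR_INZ. assert (Z.of_nat N <= Z.abs p)%Z as HZ by lia.
    apply IZR_le in HZ. lra. }
  eapply Rle_trans; [apply H|]. simpl.
  replace (A / (INR N + 1) * (wt p * wt p ^ m)) with (A * wt p ^ m * (wt p / (INR N + 1)))
    by (field; lra).
  rewrite <- (Rmult_1_r (A * wt p ^ m)) at 1. apply Rmult_le_compat_l; [nra|].
  apply Rle_div_r; lra.
Qed.

Lemma polygrowth_trunc (x : seqZ) (N : nat) : polygrowth x -> polygrowth (trunc x N).
Proof. intros [m [A H]]. exists m, A. now apply growth_bound_trunc. Qed.

Lemma polygrowth_tail (x : seqZ) (N : nat) : polygrowth x -> polygrowth (tail x N).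
Proof. intros [m [A H]]. exists (S m), (A / (INR N + 1)). now apply growth_bound_tail. Qed.

(** * Every form of C is diagonal *)

Definition cis (s : R) : C := (cos s, sin s).

Lemma Cmod_cis (s : R) : Cmod (cis s) = 1.
Proof.
  unfold Cmod, cis. simpl. pose proof (sin2_cos2 s). unfold Rsqr in *.
  replace (cos s * (cos s * 1) + sin s * (sin s * 1)) with 1 by lra. apply sqrt_1.
Qed.

Lemma Cpowz_cis (s : R) (z : Z) : Cpowz (cis s) z = cis (IZR z * s).
Proof.
  assert (Hpow : forall u n, Cpow (cis u) n = cis (INR n * u)).
  { intros u. induction n; cbn [Cpow].
    - unfold cis. now rewrite Rmult_0_l, cos_0, sin_0.
    - rewrite IHn, S_INR. unfold cis.
      replace ((INR n + 1) * u) with (u + INR n * u) by ring.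
      rewrite cos_plus, sin_plus. apply injective_projections; simpl; ring. }
  assert (Hinv : Cinv (cis s) = cis (- s)).
  { unfold Cinv, cis. simpl. rewrite cos_neg, sin_neg.
    pose proof (sin2_cos2 s). unfold Rsqr in *.
    replace (cos s * (cos s * 1) + sin s * (sin s * 1)) with 1 by lra. f_equal; field. }
  unfold Cpowz. destruct (Z.leb_spec 0 z).
  - rewrite Hpow, INR_IZR_INZ, Z2Nat.id by lia. reflexivity.
  - rewrite Hinv, Hpow, INR_IZR_INZ, Z2Nat.id, opp_IZR by lia. f_equal. ring.
Qed.

Lemma Cconj_cis_mul (s t : R) : (Cconj (cis s) * cis t)%C = cis (t - s).
Proof. unfold cis. rewrite cos_minus, sin_minus. apply injective_projections; simpl; ring. Qed.

Lemma rot_e (l : C) (p : Z) : rot l (e p) = (fun q => Cpowz l (- p) * e p q)%C.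
Proof.
  apply functional_extensionality. intros q. unfold rot.
  destruct (Z.eq_dec q p) as [->|Hqp]; [reflexivity|]. rewrite e_diff by auto. ring.
Qed.

Definition weighted_product (a : Z -> R) (x y : seqZ) : seqZ :=
  fun p => (Cconj (x p) * y p * RtoC (a p))%C.

Definition diag_form (a : Z -> R) : form := fun x y => zsum (weighted_product a x y).

Lemma weighted_product_dominated (a : Z -> R) (x y : seqZ) :
  rapidR a -> polygrowth x -> polygrowth y -> exists M, Cdominated (weighted_product a x y) M.
Proof.
  intros Ha [m [Ax Hx]] [n [Ay Hy]]. destruct (Ha (m + n + 2)%nat) as [M HM].
  exists (Ax * Ay * M). intros p. unfold weighted_product.
  rewrite !Cmod_mult, Cmod_conj, Cmod_R.
  assert (Hap : Rabs (a p) <= M / wt p ^ (m + n + 2)) by apply le_div_wt_pow, HM.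
  pose proof (growth_bound_ge0 _ _ _ Hx). pose proof (growth_bound_ge0 _ _ _ Hy).
  eapply Rle_trans.
  { apply Rmult_le_compat; [apply Rmult_le_pos; apply Cmod_ge_0 | apply Rabs_pos | |exact Hap].
    apply Rmult_le_compat; [apply Cmod_ge_0 | apply Cmod_ge_0 | apply Hx | apply Hy]. }
  replace (Ax * wt p ^ m * (Ay * wt p ^ n) * (M / wt p ^ (m + n + 2)))
    with (Ax * Ay * M * (wt p ^ (m + n) * / wt p ^ (m + n + 2)))
    by (rewrite (pow_add (wt p) m n); unfold Rdiv; ring).
  rewrite pow_mul_inv_pow_add by apply wt_gt0. apply Rle_refl.
Qed.

Section FormsOfConeC.

Variable beta : form.
Hypothesis beta_sesq : sesquilinear beta.
Hypothesis beta_cont : strong_continuous beta.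
Hypothesis beta_psd : psd beta.
Hypothesis beta_inv : invariant beta.

Lemma form_zero_l (z : seqZ) : polygrowth z -> beta (fun _ => RtoC 0) z = 0%C.
Proof.
  intros Hz. destruct beta_sesq as [_ Hsc].
  replace (fun _ : Z => RtoC 0) with (fun p => 0 * e 0%Z p)%C
    by (apply functional_extensionality; intros; ring).
  rewrite (proj1 (Hsc _ _ _ (polygrowth_e 0%Z) Hz)). apply injective_projections; simpl; ring.
Qed.

Lemma form_zero_r (z : seqZ) : polygrowth z -> beta z (fun _ => RtoC 0) = 0%C.
Proof.
  intros Hz. destruct beta_sesq as [_ Hsc].
  replace (fun _ : Z => RtoC 0) with (fun p => 0 * e 0%Z p)%C
    by (apply functional_extensionality; intros; ring).
  rewrite (proj2 (Hsc _ _ _ (polygrowth_e 0%Z) Hz)). ring.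
Qed.

Lemma form_trunc_l (x z : seqZ) (N : nat) : polygrowth x -> polygrowth z ->
  beta (trunc x N) z = zpartial (fun p => Cconj (x p) * beta (e p) z)%C N.
Proof.
  intros Hx Hz. destruct beta_sesq as [Hadd Hsc]. induction N.
  - rewrite trunc_0. exact (form_zero_l z Hz).
  - rewrite trunc_S. cbn [zpartial]. rewrite <- IHN.
    rewrite (proj1 (Hadd _ _ _ (polygrowth_trunc x N Hx)
                   (polygrowth_plus _ _ (polygrowth_scal_e _ _) (polygrowth_scal_e _ _)) Hz)).
    rewrite (proj1 (Hadd _ _ _ (polygrowth_scal_e _ _) (polygrowth_scal_e _ _) Hz)).
    rewrite !(proj1 (Hsc _ _ _ (polygrowth_e _) Hz)). reflexivity.
Qed.

Lemma form_trunc_r (w y : seqZ) (N : nat) : polygrowth w -> polygrowth y ->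
  beta w (trunc y N) = zpartial (fun q => y q * beta w (e q))%C N.
Proof.
  intros Hw Hy. destruct beta_sesq as [Hadd Hsc]. induction N.
  - rewrite trunc_0. exact (form_zero_r w Hw).
  - rewrite trunc_S. cbn [zpartial]. rewrite <- IHN.
    rewrite (proj2 (Hadd _ _ _ (polygrowth_trunc y N Hy)
                   (polygrowth_plus _ _ (polygrowth_scal_e _ _) (polygrowth_scal_e _ _)) Hw)).
    rewrite (proj2 (Hadd _ _ _ (polygrowth_scal_e _ _) (polygrowth_scal_e _ _) Hw)).
    rewrite !(proj2 (Hsc _ _ _ (polygrowth_e _) Hw)). reflexivity.
Qed.

Lemma form_e_orth (p q : Z) : p <> q -> beta (e p) (e q) = 0%C.
Proof.
  intros Hpq. destruct beta_sesq as [_ Hsc]. destruct beta_inv as [Hrot _].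
  set (t := PI / IZR (p - q)).
  pose proof (Hrot (cis t) (Cmod_cis t) (e p) (e q) (polygrowth_e p) (polygrowth_e q)) as H.
  rewrite !rot_e in H.
  rewrite (proj1 (Hsc _ _ _ (polygrowth_e p) (polygrowth_scal_e _ q))) in H.
  rewrite (proj2 (Hsc _ _ _ (polygrowth_e q) (polygrowth_e p))) in H.
  rewrite !Cpowz_cis, Cmult_assoc, Cconj_cis_mul in H.
  replace (IZR (- q) * t - IZR (- p) * t) with PI in H.
  2:{ unfold t. rewrite !opp_IZR, minus_IZR.
      assert (IZR p - IZR q <> 0) by (rewrite <- minus_IZR; apply not_0_IZR; lia).
      field. assumption. }
  unfold cis in H. rewrite cos_PI, sin_PI in H.
  destruct (beta (e p) (e q)) as [u v]. injection H. intros. apply injective_projections; simpl; lra.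
Qed.

Lemma form_e_diag (p : Z) : beta (e p) (e p) = RtoC (diagmap beta p).
Proof. apply injective_projections; [reflexivity | apply (beta_psd (e p) (polygrowth_e p))]. Qed.

Lemma form_trunc_trunc (x y : seqZ) (N : nat) : polygrowth x -> polygrowth y ->
  beta (trunc x N) (trunc y N) = zpartial (weighted_product (diagmap beta) x y) N.
Proof.
  intros Hx Hy. rewrite form_trunc_l by auto using polygrowth_trunc.
  apply zpartial_ext. intros p Hp.
  rewrite form_trunc_r, (zpartial_single _ p); auto using polygrowth_e.
  - unfold trunc, weighted_product. rewrite Hp, form_e_diag. ring.
  - intros q Hq. rewrite form_e_orth by auto. ring.
Qed.

Lemma diagmap_rapid : rapidR (diagmap beta).
Proof.
  destruct beta_cont as [B [K [HB [HK Hc]]]]. intros k. destruct (HB k) as [M HM].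
  exists (K * M * M). intros p.
  assert (Hdiag : Cmod (beta (e p) (e p)) <= K * (M / wt p ^ k) * (M / wt p ^ k)).
  { apply Hc; try apply polygrowth_e;
      intros c Hcc; rewrite dpair_e; apply le_div_wt_pow, HM, Hcc. }
  pose proof (wt_pow_gt0 p k). pose proof (pow_R1_Rle (wt p) k (wt_ge1 p)).
  assert (0 <= K * (M * M)) by (apply Rmult_le_pos; nra).
  apply Rle_trans with (wt p ^ k * (K * (M / wt p ^ k) * (M / wt p ^ k))).
  { apply Rmult_le_compat_l; [lra|]. eapply Rle_trans; [apply re_le_Cmod | exact Hdiag]. }
  replace (wt p ^ k * (K * (M / wt p ^ k) * (M / wt p ^ k))) with (K * (M * M) * / wt p ^ k)
    by (field; lra).
  replace (K * M * M) with (K * (M * M) * 1) by ring. apply Rmult_le_compat_l; [assumption|].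
  rewrite <- Rinv_1. apply Rinv_le_contravar; lra.
Qed.

Lemma diagmap_ge0 (p : Z) : 0 <= diagmap beta p.
Proof. apply (beta_psd (e p) (polygrowth_e p)). Qed.

Lemma diagmap_even (p : Z) : diagmap beta p = diagmap beta (- p).
Proof.
  assert (Hrev : rev (e p) = e (- p)).
  { apply functional_extensionality. intros q. unfold rev, e.
    destruct (Z.eqb_spec (- q) p), (Z.eqb_spec q (- p)); reflexivity || lia. }
  unfold diagmap. rewrite <- Hrev, (proj2 beta_inv); auto using polygrowth_e.
Qed.

Lemma form_growth_bound (m n : nat) : exists K, forall x y Ax Ay,
  growth_bound x m Ax -> growth_bound y n Ay -> Cmod (beta x y) <= K * Ax * Ay.
Proof.
  destruct beta_cont as [B [K [HB [HK Hc]]]].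
  destruct (dpair_bound B HB m) as [Mx HMx]. destruct (dpair_bound B HB n) as [My HMy].
  exists (K * Mx * My). intros x y Ax Ay Hx Hy.
  eapply Rle_trans.
  { apply (Hc x y (Ax * Mx) (Ay * My)); [exists m, Ax | exists n, Ay | ..]; eauto. }
  right. ring.
Qed.

Lemma form_truncation_error (x y : seqZ) : polygrowth x -> polygrowth y -> exists K, forall N,
  Cmod (beta x y - zpartial (weighted_product (diagmap beta) x y) N) <= K * / (INR N + 1).
Proof.
  intros Hx0 Hy0. pose proof Hx0 as [m [Ax Hx]]. pose proof Hy0 as [n [Ay Hy]].
  destruct beta_sesq as [Hadd _].
  destruct (form_growth_bound (S m) n) as [K1 HK1]. destruct (form_growth_bound m (S n)) as [K2 HK2].
  exists ((K1 + K2) * Ax * Ay). intros N.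
  assert (Hsplit : beta x y = (beta (tail x N) y + beta (trunc x N) (tail y N)
                               + beta (trunc x N) (trunc y N))%C).
  { transitivity (beta (fun p => trunc x N p + tail x N p)%C y); [now rewrite <- trunc_add_tail|].
    rewrite (proj1 (Hadd _ _ _ (polygrowth_trunc x N Hx0) (polygrowth_tail x N Hx0) Hy0)).
    transitivity (beta (trunc x N) (fun p => trunc y N p + tail y N p)%C
                  + beta (tail x N) y)%C; [now rewrite <- trunc_add_tail|].
    rewrite (proj2 (Hadd _ _ _ (polygrowth_trunc y N Hy0) (polygrowth_tail y N Hy0)
                     (polygrowth_trunc x N Hx0))).
    ring. }
  rewrite Hsplit, form_trunc_trunc by assumption.
  replace (beta (tail x N) y + beta (trunc x N) (tail y N)
           + zpartial (weighted_product (diagmap beta) x y) N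
           - zpartial (weighted_product (diagmap beta) x y) N)%C
    with (beta (tail x N) y + beta (trunc x N) (tail y N))%C by ring.
  eapply Rle_trans; [apply Cmod_triangle|].
  pose proof (HK1 _ _ _ _ (growth_bound_tail x m Ax N Hx) Hy).
  pose proof (HK2 _ _ _ _ (growth_bound_trunc x m Ax N Hx) (growth_bound_tail y n Ay N Hy)).
  replace ((K1 + K2) * Ax * Ay * / (INR N + 1))
    with (K1 * (Ax / (INR N + 1)) * Ay + K2 * Ax * (Ay / (INR N + 1))) by (unfold Rdiv; ring).
  lra.
Qed.

Lemma form_eq_diag_form (x y : seqZ) : polygrowth x -> polygrowth y ->
  beta x y = diag_form (diagmap beta) x y.
Proof.
  intros Hx Hy.
  destruct (weighted_product_dominated _ x y diagmap_rapid Hx Hy) as [A HA].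
  destruct (form_truncation_error x y Hx Hy) as [K HK].
  exact (zsum_eq_of_approx _ _ A K HA HK).
Qed.

End FormsOfConeC.

(** * Diagonal forms *)

Lemma Cmod_Cpowz (l : C) (z : Z) : Cmod l = 1 -> Cmod (Cpowz l z) = 1.
Proof.
  intros H. unfold Cpowz. destruct (0 <=? z)%Z.
  - rewrite Cmod_pow, H. apply pow1.
  - assert (l <> 0%C) by (intros ->; rewrite Cmod_0 in H; lra).
    rewrite Cmod_pow, Cmod_inv, H, Rinv_1 by assumption. apply pow1.
Qed.

Lemma Cconj_mul_unit (u : C) : Cmod u = 1 -> (Cconj u * u)%C = 1%C.
Proof.
  intros H. pose proof (Cmod2_conj u) as H2. rewrite H in H2.
  rewrite Cmult_comm, <- H2. apply injective_projections; simpl; ring.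
Qed.

Lemma Re_weighted_product_diag (a : Z -> R) (b : seqZ) (p : Z) :
  Re (weighted_product a b b p) = (Re (b p) ^ 2 + Im (b p) ^ 2) * a p.
Proof. unfold weighted_product, Re, Im. simpl. ring. Qed.

Lemma Im_weighted_product_diag (a : Z -> R) (b : seqZ) (p : Z) :
  Im (weighted_product a b b p) = 0.
Proof. unfold weighted_product, Re, Im. simpl. ring. Qed.

Section DiagonalForms.

Variable a : Z -> R.
Hypothesis a_rapid : rapidR a.

Lemma diag_form_sesquilinear : sesquilinear (diag_form a).
Proof.
  split.
  - intros b b' c Hb Hb' Hc.
    destruct (weighted_product_dominated a b c a_rapid Hb Hc) as [M1 D1].
    destruct (weighted_product_dominated a b' c a_rapid Hb' Hc) as [M2 D2].
    destruct (weighted_product_dominated a c b a_rapid Hc Hb) as [M3 D3].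
    destruct (weighted_product_dominated a c b' a_rapid Hc Hb') as [M4 D4].
    unfold diag_form. split.
    + rewrite <- (zsum_plus _ _ _ _ D1 D2). apply zsum_ext. intros p.
      unfold weighted_product. rewrite Cplus_conj. ring.
    + rewrite <- (zsum_plus _ _ _ _ D3 D4). apply zsum_ext. intros p.
      unfold weighted_product. ring.
  - intros s b c Hb Hc.
    destruct (weighted_product_dominated a b c a_rapid Hb Hc) as [M1 D1].
    destruct (weighted_product_dominated a c b a_rapid Hc Hb) as [M2 D2].
    unfold diag_form. split.
    + rewrite <- (zsum_scal _ _ _ D1). apply zsum_ext. intros p.
      unfold weighted_product. rewrite Cmult_conj. ring.
    + rewrite <- (zsum_scal _ _ _ D2). apply zsum_ext. intros p.
      unfold weighted_product. ring.
Qed.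

Lemma diag_form_psd : (forall p, 0 <= a p) -> psd (diag_form a).
Proof.
  intros Ha b Hb. destruct (weighted_product_dominated a b b a_rapid Hb Hb) as [M D].
  unfold diag_form. rewrite zsum_re_im. simpl. split.
  - rewrite (zsumR_ext _ (fun _ => 0)) by apply Im_weighted_product_diag.
    rewrite (zsumR_single _ 0%Z); reflexivity.
  - apply (zsumR_ge0 _ _ (Cdominated_re _ _ D)). intros p.
    rewrite Re_weighted_product_diag. apply Rmult_le_pos; [nra | apply Ha].
Qed.

Definition basis_weight (q : Z) : R := sqrt (a q) * wt q.

Definition weighted_basis (c : seqZ) : Prop :=
  exists q, c = (fun p => RtoC (basis_weight q) * e q p)%C.

Lemma basis_weight_ge0 (q : Z) : 0 <= basis_weight q.
Proof. apply Rmult_le_pos; [apply sqrt_pos | apply Rlt_le, wt_gt0]. Qed.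

Lemma weighted_basis_bounded : (forall p, 0 <= a p) -> S_bounded weighted_basis.
Proof.
  intros Ha k. destruct (a_rapid (2 * k + 2)%nat) as [M HM]. exists (sqrt M).
  intros c [q ->] p. rewrite Cmod_mult, Cmod_R, Rabs_pos_eq by apply basis_weight_ge0.
  destruct (Z.eq_dec p q) as [->|Hpq].
  - rewrite e_same, Cmod_1, Rmult_1_r. unfold basis_weight.
    pose proof (wt_gt0 q). specialize (HM q). rewrite Rabs_pos_eq in HM by apply Ha.
    replace (wt q ^ k * (sqrt (a q) * wt q)) with (sqrt (wt q ^ (2 * k + 2) * a q)).
    + now apply sqrt_le_1_alt.
    + rewrite sqrt_mult by (apply pow_le || apply Ha; lra).
      replace (2 * k + 2)%nat with ((k + 1) * 2)%nat by lia.
      rewrite pow_mult, sqrt_pow2 by (apply pow_le; lra). rewrite pow_add. simpl. ring.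
  - rewrite e_diff, Cmod_0 by auto. rewrite !Rmult_0_r. apply sqrt_pos.
Qed.

Lemma weighted_basis_seminorm (z : seqZ) (r : R) :
  (forall c, weighted_basis c -> Cmod (dpair z c) <= r) ->
  forall p, Cmod (z p) * basis_weight p <= r.
Proof.
  intros H p. specialize (H _ (ex_intro _ p eq_refl)).
  now rewrite dpair_scal_e, Cmod_mult, Cmod_R, Rabs_pos_eq in H by apply basis_weight_ge0.
Qed.

(* The seminorm of the bounded set [weighted_basis] controls |b p| * basis_weight p, and
   a p = basis_weight p ^ 2 / (1 + |p|) ^ 2. *)
Lemma diag_form_continuous : (forall p, 0 <= a p) -> strong_continuous (diag_form a).
Proof.
  intros Ha. exists weighted_basis, (4 * inv_sq_sum).
  split; [now apply weighted_basis_bounded|]. split; [pose proof inv_sq_sum_ge0; lra|].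
  intros b b' r r' Hb Hb' Hr Hr'.
  unfold diag_form. replace (4 * inv_sq_sum * r * r') with (4 * (r * r') * inv_sq_sum) by ring.
  apply zsum_bound. intros p. unfold weighted_product.
  rewrite !Cmod_mult, Cmod_conj, Cmod_R, Rabs_pos_eq by apply Ha.
  pose proof (weighted_basis_seminorm b r Hr p). pose proof (weighted_basis_seminorm b' r' Hr' p).
  pose proof (basis_weight_ge0 p). pose proof (wt_gt0 p).
  assert (Hap : a p = basis_weight p * basis_weight p / wt p ^ 2).
  { unfold basis_weight. replace (sqrt (a p) * wt p * (sqrt (a p) * wt p))
      with (sqrt (a p) * sqrt (a p) * (wt p * wt p)) by ring.
    rewrite sqrt_sqrt by apply Ha. field. lra. }
  rewrite Hap. unfold Rdiv.
  replace (Cmod (b p) * Cmod (b' p) * (basis_weight p * basis_weight p * / wt p ^ 2))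
    with ((Cmod (b p) * basis_weight p) * (Cmod (b' p) * basis_weight p) * / wt p ^ 2) by ring.
  apply Rmult_le_compat_r; [apply Rlt_le, Rinv_0_lt_compat, wt_pow_gt0|].
  apply Rmult_le_compat; auto; apply Rmult_le_pos; auto; apply Cmod_ge_0.
Qed.

Lemma diag_form_invariant : (forall p, a p = a (- p)%Z) -> invariant (diag_form a).
Proof.
  intros Heven. split.
  - intros l Hl b c Hb Hc. unfold diag_form. apply zsum_ext. intros p.
    unfold weighted_product, rot. rewrite Cmult_conj.
    pose proof (Cconj_mul_unit _ (Cmod_Cpowz l (- p) Hl)) as U.
    transitivity ((Cconj (Cpowz l (- p)) * Cpowz l (- p)) * (Cconj (b p) * c p * RtoC (a p)))%C;
      [ring | rewrite U; ring].
  - intros b c Hb Hc. destruct (weighted_product_dominated a b c a_rapid Hb Hc) as [M D].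
    unfold diag_form. rewrite <- (zsum_opp _ _ D). apply zsum_ext. intros p.
    unfold weighted_product, rev. now rewrite <- Heven.
Qed.

Lemma diag_form_definite : (forall p, 0 < a p) ->
  forall b, polygrowth b -> diag_form a b b = 0%C -> forall p, b p = 0%C.
Proof.
  intros Ha b Hb H0 p. destruct (weighted_product_dominated a b b a_rapid Hb Hb) as [M D].
  assert (Hre : zsumR (fun q => Re (weighted_product a b b q)) = 0)
    by (unfold diag_form in H0; rewrite zsum_re_im in H0; now injection H0).
  assert (Hge : forall q, 0 <= Re (weighted_product a b b q)).
  { intros q. rewrite Re_weighted_product_diag. apply Rmult_le_pos; [nra | apply Rlt_le, Ha]. }
  pose proof (zsumR_eq0_ge0 _ _ (Cdominated_re _ _ D) Hge Hre p) as Hp.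
  cbv beta in Hp. rewrite Re_weighted_product_diag in Hp. pose proof (Ha p).
  assert (Re (b p) ^ 2 + Im (b p) ^ 2 = 0) by (apply (Rmult_eq_reg_r (a p)); lra).
  pose proof (pow2_ge_0 (Re (b p))). pose proof (pow2_ge_0 (Im (b p))).
  assert (Re (b p) = 0) by (apply Rsqr_0_uniq; rewrite Rsqr_pow2; lra).
  assert (Im (b p) = 0) by (apply Rsqr_0_uniq; rewrite Rsqr_pow2; lra).
  now apply injective_projections.
Qed.

End DiagonalForms.

Lemma diagmap_diag_form (a : Z -> R) (p : Z) : diagmap (diag_form a) p = a p.
Proof.
  unfold diagmap, diag_form. rewrite (zsum_single _ p).
  - unfold weighted_product. rewrite e_same. simpl. ring.
  - intros q Hq. unfold weighted_product. rewrite e_diff by auto. ring.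
Qed.

Lemma diag_form_coneC (a : Z -> R) : coneT a -> coneC (diag_form a).
Proof.
  intros [Ha [Hpos Heven]]. split; [|split; [|split]].
  - now apply diag_form_sesquilinear.
  - now apply diag_form_continuous.
  - now apply diag_form_psd.
  - now apply diag_form_invariant.
Qed.

Lemma coneC_diagmap_coneT (beta : form) : coneC beta -> coneT (diagmap beta).
Proof.
  intros [_ [Hcont [Hpsd Hinv]]]. split; [|split].
  - exact (diagmap_rapid beta Hcont).
  - exact (diagmap_ge0 beta Hpsd).
  - exact (diagmap_even beta Hinv).
Qed.

Lemma coneC_eq_diag_form (beta : form) (x y : seqZ) : coneC beta ->
  polygrowth x -> polygrowth y -> beta x y = diag_form (diagmap beta) x y.
Proof. intros [Hs [Hc [Hp Hi]]]. exact (form_eq_diag_form beta Hs Hc Hp Hi x y). Qed.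

Lemma coneCplus_iff_coneTplus (beta : form) :
  coneC beta -> (coneCplus beta <-> coneTplus (diagmap beta)).
Proof.
  intros Hbeta. pose proof (coneC_diagmap_coneT beta Hbeta) as HT. split.
  - intros [_ [_ Hdef]]. split; [exact HT|]. intros p.
    destruct (proj1 (proj2 HT) p) as [Hlt|Hzero]; [exact Hlt|]. exfalso.
    destruct Hbeta as [_ [_ [Hpsd _]]].
    assert (Hepp : e p p = 0%C).
    { apply (Hdef (e p) (polygrowth_e p)). rewrite (form_e_diag beta Hpsd), <- Hzero. reflexivity. }
    rewrite e_same in Hepp. injection Hepp. lra.
  - intros [_ Hpos]. split; [exact Hbeta|]. split; [apply Hbeta|].
    intros b Hb Hbb. rewrite (coneC_eq_diag_form beta b b Hbeta Hb Hb) in Hbb.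
    exact (diag_form_definite _ (proj1 HT) Hpos b Hb Hbb).
Qed.

Theorem mainTheorem16 :
  (* maps C into T *)
  (forall beta : form, coneC beta -> coneT (diagmap beta)) /\
  (* morphism of cones *)
  (forall b1 b2 : form, forall p, diagmap (form_add b1 b2) p = diagmap b1 p + diagmap b2 p) /\
  (forall (t : R) (b : form), 0 <= t -> forall p, diagmap (form_scal t b) p = t * diagmap b p) /\
  (* injective (forms are identified when they agree on S^* x S^* ) *)
  (forall b1 b2 : form, coneC b1 -> coneC b2 ->
     (forall p, diagmap b1 p = diagmap b2 p) ->
     forall x y, polygrowth x -> polygrowth y -> b1 x y = b2 x y) /\
  (* surjective onto T *)
  (forall a : Z -> R, coneT a -> exists beta : form, coneC beta /\ forall p, diagmap beta p = a p) /\
  (* C^+ corresponds exactly to T^+ *)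
  (forall beta : form, coneC beta -> (coneCplus beta <-> coneTplus (diagmap beta))).
Proof.
  split; [exact coneC_diagmap_coneT|].
  split; [reflexivity|].
  split; [intros t b _ p; unfold diagmap, form_scal, Re; simpl; ring|].
  split.
  { intros b1 b2 H1 H2 Hdiag x y Hx Hy.
    rewrite (coneC_eq_diag_form b1 x y H1 Hx Hy), (coneC_eq_diag_form b2 x y H2 Hx Hy).
    now rewrite (functional_extensionality _ _ Hdiag). }
  split; [|exact coneCplus_iff_coneTplus].
  intros a Ha. exists (diag_form a). split; [exact (diag_form_coneC a Ha) | apply diagmap_diag_form].
Qed.
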